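(* Let $M$ be a finite abelian group of order $m$, $J\colon M\times M\to\mathbf{C}$, $c\in\hat{M}$ with $c^2=1$, and $i\colon\hat{M}\setminus\{c\}\to\hat{M}\setminus\{1\}$ a bijection with $i(x)=x\,i(x^{-1})$ for all $x\ne c$, such that $J(\alpha,\beta)=\frac{1}{m}\sum_{x\in\hat{M}\setminus\{c\}}\alpha(i(x))\beta(i(x)x^{-1})$ for all $\alpha,\beta\in M$. Let $F=\hat{M}\sqcup\{0\}$ with the operation $\oplus$ for which $0$ is the identity and, for $x,y\ne0$, $x\oplus y=0$ if $x=cy$ and $x\oplus y=x\,i(x/y)^{-1}$ otherwise. Then \[ J(\alpha,\beta)=\frac{1}{m}\sum_{\substack{x\oplus y=1,\\ x,y\in F\setminus\{0\}}}\alpha(x)\beta(y)\quad\text{for all }\alpha,\beta\in M. \]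
   Context: $\hat{M}$ is the Pontryagin dual of $M$, written multiplicatively with identity $1$; for $\alpha\in M$, $x\in\hat{M}$, $\alpha(x)$ is the value of the character $x$ at $\alpha$. (In the paper, $J$ is a Jacobi function, but this is not used.) *)

From mathcomp Require Import all_boot all_order all_algebra all_fingroup all_solvable all_field all_character.
Set Implicit Arguments. Unset Strict Implicit. Unset Printing Implicit Defensive.
Import GRing.Theory Num.Theory.
Local Open Scope ring_scope.

(* The Pontryagin dual of a finite abelian group G is represented by the
   irreducible (= linear) characters of G, indexed by Iirr G.
   Group law on the dual: pointwise product of characters. *)
Definition dmul (gT : finGroupType) (G : {group gT}) (x y : Iirr G) : Iirr G :=
  cfIirr ('chi_x * 'chi_y)%R.
Definition dinv (gT : finGroupType) (G : {group gT}) (x : Iirr G) : Iirr G :=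
  conjC_Iirr x.

(* F = dual ⊔ {0}, with None playing the role of 0. *)
Definition oplus (gT : finGroupType) (G : {group gT}) (c : Iirr G)
    (i : Iirr G -> Iirr G) (u v : option (Iirr G)) : option (Iirr G) :=
  match u, v with
  | None, _ => v
  | _, None => u
  | Some x, Some y =>
      if x == dmul c y then None
      else Some (dmul x (dinv (i (dmul x (dinv y)))))
  end.

From mathcomp Require Import all_boot all_order all_algebra all_fingroup all_solvable all_field all_character.
Import GRing.Theory Num.Theory.
Local Open Scope ring_scope.

(* Since the dual of an abelian group is a group, the pairs (x, y) of nonzero
   elements with x (+) y = 1 are exactly the pairs (i z, i z / z) with z != c,
   and z is recovered as x / y.  The theorem is thus a reindexing of the sum
   defining J, valid for any map i. *)

Section LinearDual.
Variables (gT : finGroupType) (G : {group gT}).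
Hypothesis abG : abelian G.

Local Notation ddiv x y := (dmul x (dinv y)).

Lemma irr_lin_char (x : Iirr G) : 'chi_x \is a linear_char.
Proof. exact: char_abelianP. Qed.

Lemma irr_unit (x : Iirr G) : 'chi_x \is a GRing.unit.
Proof. exact/lin_char_unitr/irr_lin_char. Qed.

Lemma dmulE (x y : Iirr G) : 'chi_(dmul x y) = 'chi_x * 'chi_y.
Proof. by rewrite cfIirrE // lin_char_irr // rpredM ?irr_lin_char. Qed.

Lemma dinvE (x : Iirr G) : 'chi_(dinv x) = ('chi_x)^-1.
Proof. by rewrite conjC_IirrE invr_lin_char ?irr_lin_char. Qed.

Lemma ddiv_eq0 (x y : Iirr G) : (ddiv x y == 0) = (x == y).
Proof.
apply/eqP/eqP => [|->]; last by apply: irr_inj; rewrite dmulE dinvE irr0 divrr ?irr_unit.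
by move/(congr1 (tnth (irr G))); rewrite dmulE dinvE irr0 => /divr1_eq/irr_inj.
Qed.

Lemma ddivKr (x z : Iirr G) : ddiv x (ddiv x z) = z.
Proof.
apply: irr_inj; rewrite !(dmulE, dinvE) invrM ?unitrV ?irr_unit // invrK.
by rewrite mulrCA divrr ?irr_unit ?mulr1.
Qed.

Lemma eq_dmul_ddiv (c x z : Iirr G) : (x == dmul c (ddiv x z)) = (z == c).
Proof.
apply/eqP/eqP => [|->].
  move/(congr1 (tnth (irr G))); rewrite !(dmulE, dinvE) mulrCA -{1}[_ x]mulr1.
  by move/(mulrI (irr_unit x))/esym/divr1_eq/irr_inj.
by apply: irr_inj; rewrite !(dmulE, dinvE) mulrCA divrr ?irr_unit ?mulr1.
Qed.

Variables (c : Iirr G) (i : Iirr G -> Iirr G).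

Lemma oplus_Some_eq0 (x y : Iirr G) :
  (oplus c i (Some x) (Some y) == Some 0) = (x != dmul c y) && (i (ddiv x y) == x).
Proof.
by rewrite /oplus; case: (x =P dmul c y) => //= _; rewrite (inj_eq Some_inj) ddiv_eq0 eq_sym.
Qed.

Lemma sum_oplus_eq0 (R : nmodType) (F : Iirr G -> Iirr G -> R) :
  \sum_(z | z != c) F (i z) (ddiv (i z) z) =
  \sum_x \sum_(y | oplus c i (Some x) (Some y) == Some 0) F x y.
Proof.
rewrite pair_big_dep (reindex_onto (fun z => (i z, ddiv (i z) z)) (fun p => ddiv p.1 p.2)).
  apply: eq_bigl => z.
  by rewrite oplus_Some_eq0 /= !ddivKr eq_dmul_ddiv !eqxx !andbT.
case=> x y; rewrite oplus_Some_eq0 /= => /andP[_ /eqP ix].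
by rewrite ix ddivKr.
Qed.

End LinearDual.

Theorem mainTheorem10 (gT : finGroupType) (G : {group gT}) (abG : abelian G)
  (J : gT -> gT -> algC) (c : Iirr G) (i : Iirr G -> Iirr G)
  (hc : dmul c c = 0)
  (hi_range : forall x, x != c -> i x != 0)
  (hi_inj : {in [pred x | x != c] &, injective i})
  (hi_surj : forall y, y != 0 -> exists2 x, x != c & i x = y)
  (hi_rel : forall x, x != c -> i x = dmul x (i (dinv x)))
  (hJ : forall a b, a \in G -> b \in G ->
     J a b = (#|G|%:R)^-1 *
       \sum_(x : Iirr G | x != c) 'chi_(i x) a * 'chi_(dmul (i x) (dinv x)) b) :
  forall a b, a \in G -> b \in G ->
    J a b = (#|G|%:R)^-1 *
      \sum_(x : Iirr G) \sum_(y : Iirr G | oplus c i (Some x) (Some y) == Some 0)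
         'chi_x a * 'chi_y b.
Proof.
move=> a b Ga Gb.
by rewrite hJ // (@sum_oplus_eq0 _ _ abG c i _ (fun x y => 'chi_x a * 'chi_y b)).
Qed.
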